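(* Let $\ell\ge 2$ and let $G$ be a bipartite graph with an edge $uv\in E(G)$. Suppose $G$ has $\ell$ pairwise vertex-disjoint edges $w_iz_i$ ($1\le i\le \ell$) such that $w_1,\dots,w_\ell\in N(v)\setminus\{u\}$, $z_1,\dots,z_\ell\in N(u)\setminus\{v\}$, and $(w_{i-1},z_{i-1},w_i,z_i)$ is rich for every $2\le i\le\ell$. Then $G$ contains a copy of $C_{2\ell}^{\square}$.
   Context: For distinct vertices $w,z,w',z'$ of $G$, the $4$-tuple $(w,z,w',z')$ is rich if $wz,w'z'\in E(G)$ and there are at least $4\ell$ pairwise vertex-disjoint edges $xy\in E(G)$ with $wx,xw',zy,yz'\in E(G)$. $N(v)$ is the neighbourhood of $v$. $C_{2\ell}^{\square}$ consists of two vertex-disjoint $2\ell$-cycles $a_1\cdots a_{2\ell}a_1$, $b_1\cdots b_{2\ell}b_1$ plus the edges $a_ib_i$. *)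

From mathcomp Require Import all_boot.
Set Implicit Arguments. Unset Strict Implicit. Unset Printing Implicit Defensive.

Definition simple_graph (T : finType) (e : rel T) : Prop :=
  symmetric e /\ irreflexive e.

Definition bipartite (T : finType) (e : rel T) : Prop :=
  exists c : T -> bool, forall x y, e x y -> c x != c y.

Definition vdisjoint_edges (T : finType) (M : {set T * T}) : Prop :=
  forall p q, p \in M -> q \in M -> p != q ->
    [/\ p.1 != q.1, p.1 != q.2, p.2 != q.1 & p.2 != q.2].

Definition rich (T : finType) (e : rel T) (l : nat) (w z w' z' : T) : Prop :=
  uniq [:: w; z; w'; z'] /\ e w z /\ e w' z' /\
  exists M : {set T * T},
    [/\ 4 * l <= #|M|, vdisjoint_edges M &
        forall p, p \in M ->
          [/\ e p.1 p.2, e w p.1, e p.1 w', e z p.2 & e p.2 z']].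

(* G contains a copy of C_{2l}^square: vertices a_1..a_{2l}, b_1..b_{2l},
   all distinct, cycles a_1...a_{2l}a_1 and b_1...b_{2l}b_1, and edges a_i b_i. *)
Definition has_prism (T : finType) (e : rel T) (l : nat) : Prop :=
  exists a b : nat -> T,
    [/\ (forall i j, 1 <= i <= 2 * l -> 1 <= j <= 2 * l ->
           [/\ a i = a j -> i = j, b i = b j -> i = j & a i != b j]),
        (forall i, 1 <= i < 2 * l -> e (a i) (a i.+1) /\ e (b i) (b i.+1)),
        e (a (2 * l)) (a 1), e (b (2 * l)) (b 1) &
        (forall i, 1 <= i <= 2 * l -> e (a i) (b i))].

From mathcomp Require Import all_boot zify.

Set Implicit Arguments.
Unset Strict Implicit.
Unset Printing Implicit Defensive.

(* Proof of Lemma 5.5.  The prism C_{2l}^square is built as a ladder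
     a = v, w_1, x_1, w_2, x_2, ..., x_{l-1}, w_l
     b = u, z_1, y_1, z_2, y_2, ..., y_{l-1}, z_l
   where, for 1 <= i < l, the rung x_i y_i is one of the 4l vertex-disjoint
   edges witnessing that (w_i, z_i, w_{i+1}, z_{i+1}) is rich. *)

Section Rungs.
Variable T : finType.

Definition rungs (x y : nat -> T) (r : seq nat) : seq T :=
  flatten [seq [:: x i; y i] | i <- r].

Lemma rungs_cat x y r1 r2 : rungs x y (r1 ++ r2) = rungs x y r1 ++ rungs x y r2.
Proof. by rewrite /rungs map_cat flatten_cat. Qed.

Lemma size_rungs x y r : size (rungs x y r) = 2 * size r.
Proof. by elim: r => //= i r IH; rewrite IH mulnS. Qed.

Lemma nth_rungs d x y r i : i < size r ->
  nth d (rungs x y r) (2 * i) = x (nth 0 r i) /\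
  nth d (rungs x y r) (2 * i).+1 = y (nth 0 r i).
Proof.
elim: r i => [|j r IH] [|i] // /[!ltnS] /IH.
by rewrite mulnS !addSn add0n.
Qed.

Lemma eq_in_rungs x y x' y' r :
  {in r, x =1 x'} -> {in r, y =1 y'} -> rungs x y r = rungs x' y' r.
Proof. by move=> ex ey; congr flatten; apply/eq_in_map => i ir; rewrite ex ?ey. Qed.

(* A family of more than |s| vertex-disjoint edges contains an edge with no
   endpoint in s: each edge meeting s can be charged to a distinct vertex of
   s. *)
Lemma avoiding_edge (M : {set T * T}) (s : seq T) :
  vdisjoint_edges M -> size s < #|M| ->
  exists2 p, p \in M & (p.1 \notin s) && (p.2 \notin s).
Proof.
move=> dM lt_s_M.
pose hit := [set p in M | (p.1 \in s) || (p.2 \in s)].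
pose end_in_s (p : T * T) := if p.1 \in s then p.1 else p.2.
have end_inj : {in hit &, injective end_in_s}.
  move=> p q /[!inE] /andP[pM _] /andP[qM _] epq; apply/eqP/negPn/negP => npq.
  have [h11 h12 h21 h22] := dM p q pM qM npq.
  move: epq; rewrite /end_in_s; do 2 case: ifP => _; move=> E;
    [move: h11 | move: h12 | move: h21 | move: h22]; by rewrite E eqxx.
have hit_small : #|hit| <= size s.
  rewrite -(card_in_imset end_inj); apply: leq_trans (card_size s).
  apply/subset_leq_card/subsetP => t /imsetP[p /[!inE] /andP[_ ps] ->].
  by rewrite /end_in_s; case: ifP => // /negbT; move: ps => /orP[->|].
have /subsetPn[p pM] : ~~ (M \subset hit).
  by apply/negP => /subset_leq_card; lia.
by rewrite inE pM negb_or; exists p.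
Qed.

(* Greedy choice of rungs: if at step i a family of vertex-disjoint edges
   with property [P i] is larger than the |s| + 2(i-1) vertices used so
   far, then rungs with [P i] can be chosen that are disjoint from s and
   from each other. *)
Lemma greedy_rungs (x0 : T) (P : nat -> T -> T -> Prop) (s : seq T) k :
  uniq s ->
  (forall i, 1 <= i <= k -> exists M : {set T * T},
     [/\ vdisjoint_edges M, size s + 2 * i.-1 < #|M| &
         forall p, p \in M -> P i p.1 p.2 /\ p.1 != p.2]) ->
  exists x y : nat -> T,
    (forall i, 1 <= i <= k -> P i (x i) (y i)) /\ uniq (s ++ rungs x y (iota 1 k)).
Proof.
move=> s_uniq; elim: k => [|k IH] hM.
  by exists (fun=> x0), (fun=> x0); split=> [i hi|]; [lia | rewrite /= cats0].
have [x [y [Pxy xy_uniq]]] := IH (fun i hi => hM i ltac:(lia)).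
have [M [dM card_M PM]] := hM k.+1 ltac:(lia).
have small_prefix : size (s ++ rungs x y (iota 1 k)) < #|M|.
  by rewrite size_cat size_rungs size_iota.
have [p pM /andP[p1_new p2_new]] := avoiding_edge dM small_prefix.
have [Pp p1_neq_p2] := PM p pM.
pose x' i := if i == k.+1 then p.1 else x i.
pose y' i := if i == k.+1 then p.2 else y i.
have old_rungs : rungs x' y' (iota 1 k) = rungs x y (iota 1 k).
  by apply: eq_in_rungs => i /[!mem_iota] hi; rewrite /x' /y' ifN //; lia.
exists x', y'; split.
  by move=> i hi; rewrite /x' /y'; case: eqP => [->|ne] //; apply: Pxy; lia.
rewrite -(addn1 k) iotaD rungs_cat old_rungs catA cat_uniq xy_uniq /= add1n /x' /y' eqxx.
by rewrite (negbTE p1_new) (negbTE p2_new) inE p1_neq_p2.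
Qed.
End Rungs.

Definition frame (T : finType) (u v : T) (w z : nat -> T) (l : nat) : seq T :=
  u :: v :: map w (iota 1 l) ++ map z (iota 1 l).

Lemma size_frame (T : finType) (u v : T) w z l : size (frame u v w z l) = 2 * l + 2.
Proof. by rewrite /= size_cat !size_map size_iota; lia. Qed.

Lemma prism_index_cases l n : 1 <= n <= 2 * l ->
  [\/ n = 1, exists2 i, 1 <= i <= l & n = 2 * i | exists2 i, 1 <= i < l & n = (2 * i).+1].
Proof.
move=> hn; have [->|n_neq1] := eqVneq n 1; first by constructor 1.
have [n_even|n_odd] := eqVneq (n %% 2) 0.
  by constructor 2; exists (n %/ 2); lia.
by constructor 3; exists (n %/ 2); lia.
Qed.

Definition rung_edges (T : finType) (e : rel T) (w z : nat -> T) i (a b : T) : Prop :=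
  [/\ e a b, e (w i) a, e a (w i.+1), e (z i) b & e b (z i.+1)].

Section Ladder.
Variables (T : finType) (e : rel T) (l : nat) (u v : T) (w z x y : nat -> T).
Hypothesis l_gt0 : 0 < l.

Let S := frame u v w z l ++ rungs x y (iota 1 l.-1).

Lemma size_ladder : size S = 4 * l.
Proof. by rewrite size_cat size_frame size_rungs size_iota; lia. Qed.

Lemma nth_ladder_frame i : 1 <= i <= l -> nth u S i.+1 = w i /\ nth u S (l + i).+1 = z i.
Proof.
move=> hi; rewrite !nth_cat size_frame !ifT; try lia.
case: i hi => // i hi; rewrite addnS /= !nth_cat !size_map size_iota ifT ?ifN; try lia.
rewrite !(nth_map 0) ?size_iota ?nth_iota; try lia.
by rewrite add1n addKn.
Qed.

Lemma nth_ladder_rung i : 1 <= i < l ->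
  nth u S (2 * l + 2 * i) = x i /\ nth u S (2 * l + 2 * i).+1 = y i.
Proof.
move=> hi; rewrite !nth_cat size_frame !ifN; try lia.
have -> : 2 * l + 2 * i - (2 * l + 2) = 2 * i.-1 by lia.
have -> : (2 * l + 2 * i).+1 - (2 * l + 2) = (2 * i.-1).+1 by lia.
have [|-> ->] := nth_rungs u x y (r := iota 1 l.-1) (i := i.-1); rewrite ?size_iota; try lia.
by rewrite nth_iota ?add1n ?prednK //; lia.
Qed.

(* Positions in S of the prism vertices a_n and b_n: a_1 = v, a_{2i} = w_i,
   a_{2i+1} = x_i, and b_1 = u, b_{2i} = z_i, b_{2i+1} = y_i. *)
Definition pos_a n := if n == 1 then 1 else if n %% 2 == 0 then (n %/ 2).+1 else 2 * l + n.-1.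
Definition pos_b n := if n == 1 then 0 else if n %% 2 == 0 then l + (n %/ 2).+1 else 2 * l + n.

Lemma pos_ab_inj i j : 1 <= i <= 2 * l -> 1 <= j <= 2 * l ->
  [/\ pos_a i < 4 * l, pos_b i < 4 * l, pos_a i = pos_a j -> i = j,
      pos_b i = pos_b j -> i = j & pos_a i != pos_b j].
Proof. by rewrite /pos_a /pos_b => hi hj; split; do ! case: ifP => /eqP ?; lia. Qed.

Let a n := nth u S (pos_a n).
Let b n := nth u S (pos_b n).

Lemma ladder_first : a 1 = v /\ b 1 = u.
Proof. by []. Qed.

Lemma ladder_even i : 1 <= i <= l -> a (2 * i) = w i /\ b (2 * i) = z i.
Proof.
move=> hi; rewrite /a /b -(proj1 (nth_ladder_frame hi)) -(proj2 (nth_ladder_frame hi)).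
by rewrite /pos_a /pos_b; split; congr nth; do ! case: ifP => /eqP ?; lia.
Qed.

Lemma ladder_odd i : 1 <= i < l -> a (2 * i).+1 = x i /\ b (2 * i).+1 = y i.
Proof.
move=> hi; rewrite /a /b -(proj1 (nth_ladder_rung hi)) -(proj2 (nth_ladder_rung hi)).
by rewrite /pos_a /pos_b; split; congr nth; do ! case: ifP => /eqP ?; lia.
Qed.

Hypothesis ladder_uniq : uniq S.
Hypothesis e_vu : e v u.
Hypothesis e_first : e v (w 1) /\ e u (z 1).
Hypothesis e_last : e (w l) v /\ e (z l) u.
Hypothesis e_wz : forall i, 1 <= i <= l -> e (w i) (z i).
Hypothesis e_rung : forall i, 1 <= i < l -> rung_edges e w z i (x i) (y i).

Lemma prism_of_ladder : has_prism e l.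
Proof.
have nth_S_inj k1 k2 : k1 < 4 * l -> k2 < 4 * l -> nth u S k1 = nth u S k2 -> k1 = k2.
  by move=> lt1 lt2 /eqP; rewrite nth_uniq ?size_ladder // => /eqP.
have [a1 b1] := ladder_first.
exists a, b; split.
- move=> i j hi hj; have [ai_lt bi_lt a_inj b_inj ab] := pos_ab_inj hi hj.
  have [aj_lt bj_lt _ _ _] := pos_ab_inj hj hi.
  split.
  + by move/(nth_S_inj _ _ ai_lt aj_lt); apply: a_inj.
  + by move/(nth_S_inj _ _ bi_lt bj_lt); apply: b_inj.
  + by apply: contra_neq ab; apply: nth_S_inj.
- move=> n hn; have [n1|[i hi n2i]|[i hi n2i1]] := prism_index_cases (l := l) (n := n) ltac:(lia).
  + by subst n; have [-> ->] := ladder_even (i := 1) ltac:(lia); rewrite a1 b1.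
  + subst n; have [ai bi] := ladder_even hi.
    have [ai' bi'] := ladder_odd (i := i) ltac:(lia).
    by have [_ ? _ ? _] := e_rung (i := i) ltac:(lia); rewrite ai bi ai' bi'.
  + subst n; have [ai bi] := ladder_odd hi.
    have [ai' bi'] := ladder_even (i := i.+1) ltac:(lia).
    have -> : (2 * i).+2 = 2 * i.+1 by lia.
    by have [_ _ ? _ ?] := e_rung hi; rewrite ai bi ai' bi'.
- by have [-> _] := ladder_even (i := l) ltac:(lia); rewrite a1; case: e_last.
- by have [_ ->] := ladder_even (i := l) ltac:(lia); rewrite b1; case: e_last.
- move=> n hn; case: (prism_index_cases hn) => [->|[i hi ->]|[i hi ->]].
  + by rewrite a1 b1.
  + by have [-> ->] := ladder_even hi; apply: e_wz.
  + by have [-> ->] := ladder_odd hi; case: (e_rung hi).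
Qed.
End Ladder.

Lemma frame_uniq (T : finType) (e : rel T) l (u v : T) (w z : nat -> T) :
  irreflexive e -> e u v ->
  (forall i, 1 <= i <= l -> e (w i) (z i)) ->
  (forall i j, 1 <= i <= l -> 1 <= j <= l -> i != j ->
     [/\ w i != w j, w i != z j, z i != w j & z i != z j]) ->
  (forall i, 1 <= i <= l -> e v (w i) /\ w i != u) ->
  (forall i, 1 <= i <= l -> e u (z i) /\ z i != v) ->
  uniq (frame u v w z l).
Proof.
move=> irr e_uv e_wz wz_disj hv hu.
have edge_neq a b : e a b -> a != b by apply: contraTneq => ->; rewrite irr.
have w_inj : {in iota 1 l &, injective w}.
  move=> i j /[!mem_iota] hi hj; apply: contra_eq => ne.
  by case: (wz_disj i j) => //; lia.
have z_inj : {in iota 1 l &, injective z}.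
  move=> i j /[!mem_iota] hi hj; apply: contra_eq => ne.
  by case: (wz_disj i j) => //; lia.
have avoids f t : (forall i, 1 <= i <= l -> f i != t) -> t \notin map f (iota 1 l).
  by move=> neq; apply/mapP => -[i /[!mem_iota] hi /eqP]; rewrite eq_sym (negbTE (neq i _)) //; lia.
rewrite /frame !cons_uniq cat_uniq !map_inj_in_uniq ?iota_uniq // !inE !mem_cat !negb_or.
rewrite (edge_neq _ _ e_uv) /= andbT; apply/and3P; split.
- apply/andP; split; apply: avoids => i hi; first by case: (hv i hi).
  by rewrite eq_sym edge_neq //; case: (hu i hi).
- apply/andP; split; apply: avoids => i hi; last by case: (hu i hi).
  by rewrite eq_sym edge_neq //; case: (hv i hi).
- apply/hasPn => _ /mapP[j /[!mem_iota] hj ->]; apply: avoids => i hi.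
  have [<-|ne] := eqVneq i j; first exact/edge_neq/e_wz.
  by case: (wz_disj i j hi _ ne) => //; lia.
Qed.

Theorem lemma5p5 (T : finType) (e : rel T) (l : nat) (u v : T)
  (w z : nat -> T) :
  simple_graph e -> bipartite e -> 2 <= l -> e u v ->
  (forall i, 1 <= i <= l -> e (w i) (z i)) ->
  (forall i j, 1 <= i <= l -> 1 <= j <= l -> i != j ->
     [/\ w i != w j, w i != z j, z i != w j & z i != z j]) ->
  (forall i, 1 <= i <= l -> e v (w i) /\ w i != u) ->
  (forall i, 1 <= i <= l -> e u (z i) /\ z i != v) ->
  (forall i, 2 <= i <= l -> rich e l (w i.-1) (z i.-1) (w i) (z i)) ->
  has_prism e l.
Proof.
move=> [e_sym e_irr] _ l_ge2 e_uv e_wz wz_disj hv hu hrich.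
have frame_ok := frame_uniq e_irr e_uv e_wz wz_disj hv hu.
have [|x [y [xy_rung ladder_ok]]] :=
  greedy_rungs u (P := rung_edges e w z) (k := l.-1) frame_ok.
  move=> i hi; have [_ [_ [_ [M [card_M dM M_rung]]]]] := hrich i.+1 ltac:(lia).
  exists M; split; rewrite ?size_frame //; first lia.
  move=> p /M_rung[p_edge *]; split; first by [].
  by apply: contraTneq p_edge => ->; rewrite e_irr.
apply: (prism_of_ladder _ ladder_ok); first lia.
- by rewrite e_sym.
- by split; [case: (hv 1 _) | case: (hu 1 _)]; lia.
- by rewrite !(e_sym _ v) !(e_sym _ u); split; [case: (hv l _) | case: (hu l _)]; lia.
- exact: e_wz.
- by move=> i hi; apply: xy_rung; lia.
Qed.
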